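(* In the standing setting below, let $X_i=(x_i,u_i)\in\mathbb{X}\times\mathbb{R}$ for $i=0,1$, and suppose $F_{X_0X_1}(x_i)=u_i$ for $i=0,1$. Then there exist $y\in\mathbb{Y}$ and $h\in\mathbb{R}$ such that $-c(x_i,y)+h=u_i$ for $i=0,1$.
   Context: Standing setting: $\mathbb{X},\mathbb{Y}\subset\mathbb{R}^n$ are compact with non-empty interior; $c:\mathbb{X}\times\mathbb{Y}\to\mathbb{R}$ has continuous $D_xc$, $D_yc$, and continuous mixed second derivatives with $D^2_{xy}c=(D^2_{yx}c)^T$; for each $x$ the map $y\mapsto -D_xc(x,y)$ is injective on $\mathbb{Y}$ and for each $y$ the map $x\mapsto -D_yc(x,y)$ is injective on $\mathbb{X}$; $D^2_{xy}c(x,y)$ is invertible everywhere; for every $y$ the set $\{-D_yc(x,y):x\in\mathbb{X}\}$ is convex and for every $x$ the set $\{-D_xc(x,y):y\in\mathbb{Y}\}$ is convex. $c$-chord: for $X_i=(x_i,u_i)\in\mathbb{X}\times\mathbb{R}$, $F_{X_0X_1}(x)=\sup\{-c(x,y)+h: y\in\mathbb{Y},h\in\mathbb{R},-c(x_i,y)+h\le u_i, i=0,1\}$. *)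

From HB Require Import structures.
From mathcomp Require Import all_boot all_order all_algebra.
From mathcomp Require Import all_classical all_reals all_analysis.
Set Implicit Arguments. Unset Strict Implicit. Unset Printing Implicit Defensive.
Import Order.TTheory GRing.Theory Num.Theory.
Import numFieldNormedType.Exports.
Local Open Scope classical_set_scope.
Local Open Scope ring_scope.

(* Points of R^n are row vectors 'rV[R]_n; delta_mx 0 i is the i-th standard basis vector. *)

Definition Dx (R : realType) (n : nat) (c : 'rV[R]_n -> 'rV[R]_n -> R)
  (x y : 'rV[R]_n) : 'rV[R]_n :=
  \row_i 'D_(delta_mx 0 i) (fun x' => c x' y) x.

Definition Dy (R : realType) (n : nat) (c : 'rV[R]_n -> 'rV[R]_n -> R)
  (x y : 'rV[R]_n) : 'rV[R]_n :=
  \row_j 'D_(delta_mx 0 j) (fun y' => c x y') y.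

Definition Dxy (R : realType) (n : nat) (c : 'rV[R]_n -> 'rV[R]_n -> R)
  (x y : 'rV[R]_n) : 'M[R]_n :=
  \matrix_(i, j) ('D_(delta_mx 0 j) (fun y' => Dx c x y') y) 0 i.

Definition Dyx (R : realType) (n : nat) (c : 'rV[R]_n -> 'rV[R]_n -> R)
  (x y : 'rV[R]_n) : 'M[R]_n :=
  \matrix_(j, i) ('D_(delta_mx 0 i) (fun x' => Dy c x' y) x) 0 j.

Definition standing_setting (R : realType) (n : nat) (X Y : set 'rV[R]_n)
  (c : 'rV[R]_n -> 'rV[R]_n -> R) : Prop :=
  (compact X /\ compact Y /\ X° !=set0 /\ Y° !=set0) /\
   ({within X `*` Y, continuous (fun p => c p.1 p.2)}
   /\ (forall x y, X x -> Y y ->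
        differentiable (fun x' => c x' y) x /\ differentiable (fun y' => c x y') y)
   /\ {within X `*` Y, continuous (fun p => Dx c p.1 p.2)}
   /\ {within X `*` Y, continuous (fun p => Dy c p.1 p.2)}) /\
   (
   (forall x y, X x -> Y y ->
        differentiable (fun y' => Dx c x y') y /\ differentiable (fun x' => Dy c x' y) x)
   /\ {within X `*` Y, continuous (fun p => Dxy c p.1 p.2)}
   /\ {within X `*` Y, continuous (fun p => Dyx c p.1 p.2)}
   /\ (forall x y, X x -> Y y -> Dxy c x y = (Dyx c x y)^T)) /\
   (
   (forall x, X x -> {in Y &, injective (fun y => - Dx c x y)})
   /\ (forall y, Y y -> {in X &, injective (fun x => - Dy c x y)})) /\
   (forall x y, X x -> Y y -> Dxy c x y \in unitmx) /\
   (
   (forall y, Y y ->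
      convex_set ([set - Dy c x y | x in X] : set (convex_lmodType 'rV[R]_n)))
   /\ (forall x, X x ->
      convex_set ([set - Dx c x y | y in Y] : set (convex_lmodType 'rV[R]_n)))).

Definition cchord (R : realType) (n : nat) (Y : set 'rV[R]_n)
  (c : 'rV[R]_n -> 'rV[R]_n -> R) (x0 : 'rV[R]_n) (u0 : R)
  (x1 : 'rV[R]_n) (u1 : R) (x : 'rV[R]_n) : R :=
  sup [set r | exists y h, [/\ Y y, - c x0 y + h <= u0, - c x1 y + h <= u1
                              & r = - c x y + h]].

From HB Require Import structures.
From mathcomp Require Import all_boot all_order all_algebra.
From mathcomp Require Import all_classical all_reals all_analysis.
From mathcomp Require Import lra.
Set Implicit Arguments. Unset Strict Implicit. Unset Printing Implicit Defensive.
Import Order.TTheory GRing.Theory Num.Theory.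
Import numFieldNormedType.Exports.
Local Open Scope classical_set_scope.
Local Open Scope ring_scope.

(* Put g y := c x1 y - c x0 y.  Since F(x0) is the supremum over y of
   min(u0, u1 + g y), the hypothesis F(x0) = u0 forces max_Y g >= u0 - u1, the
   maximum being attained on the compact Y; symmetrically F(x1) = u1 forces
   min_Y g <= u0 - u1.  The continuous injection y |-> - D_x c(x0, y) maps the
   compact Y homeomorphically onto a convex, hence connected, set, so Y is
   connected and g takes the value u0 - u1 at some y; then h := u0 + c x0 y. *)

Lemma connected_convex (R : realType) (V : normedModType R) (K : set V) :
  convex_set (K : set (convex_lmodType V)) -> connected K.
Proof.
move=> cK; have [->|/set0P[p Kp]] := eqVneq K set0; first exact: connected0.
pose seg q := (fun t : R => t *: p + (1 - t) *: q) @` `[0, 1].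
have segK q : K q -> seg q `<=` K.
  move=> Kq x [t]; rewrite /= in_itv /= => /andP[t0 t1] <-.
  by have := cK p q (Itv01 t0 t1); rewrite !inE => /(_ Kp Kq).
have -> : K = \bigcup_(q in K) seg q.
  apply/seteqP; split=> [q Kq|x [q Kq]]; last exact: segK.
  exists q => //; exists 0; first by rewrite /= in_itv /= lexx ler01.
  by rewrite scale0r add0r subr0 scale1r.
apply: bigcup_connected.
  exists p => q _; exists 1; first by rewrite /= in_itv /= lexx ler01.
  by rewrite scale1r subrr scale0r addr0.
move=> q _; apply: connected_continuous_connected; first exact: segment_connected.
apply: continuous_subspaceT => t.
by apply: cvgD; apply: cvgZl => //; apply: cvgB => //; exact: cvg_cst.
Qed.

Lemma separated_closed (T : topologicalType) (A P Q : set T) :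
  closed A -> A = P `|` Q -> separated P Q -> closed P.
Proof.
move=> clA APQ [sPQ _] x Px.
have : A x by rewrite (closure_id A).1 // APQ; exact: closure_subset Px.
rewrite APQ => -[//|Qx].
by have : (closure P `&` Q) x by []; rewrite sPQ.
Qed.

Lemma inj_image_connected (T U : topologicalType) (A : set T) (f : T -> U) :
  hausdorff_space T -> hausdorff_space U -> compact A ->
  {within A, continuous f} -> {in A &, injective f} ->
  connected (f @` A) -> connected A.
Proof.
move=> hT hU cA cf injf cfA; apply/connectedP => E [E0 AE sE].
have clA : closed A := compact_closed hT cA.
have EA b : E b `<=` A by rewrite AE; case: b => x; [right|left].
have clE b : closed (E b).
  case: b; last exact: separated_closed clA AE sE.
  by apply: (separated_closed clA); [rewrite AE setUC|rewrite separatedC].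
have clfE b : closed (f @` E b).
  apply: compact_closed hU (continuous_compact _ _).
    exact: continuous_subspaceW (EA b) cf.
  exact: subclosed_compact (clE b) cA (EA b).
have E01 : E false `&` E true = set0 := separated_disjoint sE.
have AEb b a : E b a -> a \in A by move/EA; rewrite inE.
have fE01 : f @` E false `&` f @` E true = set0.
  apply/seteqP; split => // _ [[a Ea <-] [b Eb fab]].
  have ab : b = a := injf _ _ (AEb _ _ Eb) (AEb _ _ Ea) fab.
  suff : (E false `&` E true) a by rewrite E01.
  by split=> //; rewrite -ab.
have sfE : separated (f @` E false) (f @` E true).
  by rewrite /separated -!(closure_id _).1 // fE01.
have fAE : f @` A `<=` f @` E false `|` f @` E true.
  by move=> x [a]; rewrite AE => -[Ea|Ea] <-; [left|right]; exists a.
have notfE b : ~ f @` A `<=` f @` E b.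
  have [a Ea] := E0 (~~ b) => /(_ (f a)) [|a' Ea' fa'a].
    by exists a => //; exact: EA Ea.
  have a'a : a' = a := injf _ _ (AEb _ _ Ea') (AEb _ _ Ea) fa'a.
  suff : (E false `&` E true) a by rewrite E01.
  by rewrite a'a in Ea'; case: b Ea Ea'.
by case: (connected_subset sfE fAE cfA); exact: notfE.
Qed.

Lemma connected_ivt (T : topologicalType) (R : realType) (A : set T) (g : T -> R)
    (a b : T) (t : R) :
  connected A -> {within A, continuous g} -> A a -> A b ->
  g a <= t <= g b -> exists2 y, A y & g y = t.
Proof.
move=> cA cg Aa Ab gt.
have /connected_intervalP gA := connected_continuous_connected cA cg.
by have [y Ay <-] := gA _ _ (imageP g Aa) (imageP g Ab) t gt; exists y.
Qed.

Lemma continuous_within_slice (T1 T2 U : topologicalType) (A : set T1) (B : set T2)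
    (F : T1 * T2 -> U) (a : T1) :
  {within A `*` B, continuous F} -> A a -> {within B, continuous (fun b => F (a, b))}.
Proof.
move=> /continuous_subspace_prodP cF Aa; rewrite continuous_subspace_in => b Bb.
have := cF (a, b); rewrite inE => /(_ (conj Aa (set_mem Bb))) cFab.
apply: (@continuous_comp _ _ _ (fun b : subspace B => ((a : subspace A), b))
  (F : subspace A * subspace B -> U)) => //.
by apply: cvg_pair => //; exact: cvg_cst.
Qed.

Section cchord.
Variables (R : realType) (n : nat) (Y : set 'rV[R]_n) (c : 'rV[R]_n -> 'rV[R]_n -> R).

Lemma cchordC x0 u0 x1 u1 : cchord Y c x0 u0 x1 u1 = cchord Y c x1 u1 x0 u0.
Proof.
apply/funext => x; rewrite /cchord; congr sup; apply/seteqP.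
by split=> r [y [h [Yy h0 h1 ->]]]; exists y, h.
Qed.

Lemma cchord_node_witness x0 u0 x1 u1 :
  compact Y -> Y !=set0 ->
  {within Y, continuous c x0} -> {within Y, continuous c x1} ->
  cchord Y c x0 u0 x1 u1 x0 = u0 -> exists2 y, Y y & u0 <= u1 + c x1 y - c x0 y.
Proof.
move=> cY Y0 cc0 cc1 F0.
have cg : {within Y, continuous (fun y => u1 + c x1 y - c x0 y)}.
  by move=> y; apply: cvgB; [apply: cvgD; [exact: cvg_cst|exact: cc1]|exact: cc0].
have [ym /set_mem Yym gmax] := compact_EVT_max Y0 cY cg.
exists ym => //; rewrite -F0; apply: ge_sup.
  have [y Yy] := Y0; pose h := Num.min (u0 + c x0 y) (u1 + c x1 y).
  exists (- c x0 y + h), y, h; split => //; rewrite addrC lerBlDr /h.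
    by rewrite ge_min lexx.
  by rewrite ge_min lexx orbT.
move=> _ [y [h [Yy _ h1 ->]]]; apply: le_trans (gmax y (mem_set Yy)).
by lra.
Qed.

End cchord.

Theorem lemma3p6 (R : realType) (n : nat) (X Y : set 'rV[R]_n)
  (c : 'rV[R]_n -> 'rV[R]_n -> R) (x0 x1 : 'rV[R]_n) (u0 u1 : R) :
  standing_setting X Y c ->
  X x0 -> X x1 ->
  cchord Y c x0 u0 x1 u1 x0 = u0 ->
  cchord Y c x0 u0 x1 u1 x1 = u1 ->
  exists y h, [/\ Y y, - c x0 y + h = u0 & - c x1 y + h = u1].
Proof.
move=> [[_ [cY [_ iY]]] [[cc [_ [cDx _]]] [_ [[injDx _] [_ [_ cvxDx]]]]]] Xx0 Xx1 F0 F1.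
have Y0 : Y !=set0 by case: iY => y /interior_subset Yy; exists y.
have cc0 := continuous_within_slice cc Xx0; have cc1 := continuous_within_slice cc Xx1.
have [yb Yyb gb] := cchord_node_witness cY Y0 cc0 cc1 F0.
rewrite cchordC in F1; have [ya Yya ga] := cchord_node_witness cY Y0 cc1 cc0 F1.
have Yconn : connected Y.
  apply: (inj_image_connected (f := fun y => - Dx c x0 y)) => //.
  - by move=> y; apply: cvgN; exact: continuous_within_slice cDx Xx0 y.
  - exact: injDx.
  - exact: connected_convex (cvxDx _ Xx0).
have cg : {within Y, continuous (fun y => c x1 y - c x0 y)}.
  by move=> y; apply: cvgB; [exact: cc1|exact: cc0].
have [|y Yy gy] := connected_ivt (t := u0 - u1) Yconn cg Yya Yyb.
  by apply/andP; split; lra.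
by exists y, (u0 + c x0 y); split => //; lra.
Qed.
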